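(* Let $\mathcal V\subset\mathbb Q$ satisfy Hypothesis (H) and let $\mathcal R\subset\mathbb Q$ satisfy property $\star_{\mathcal V}$. Then the $\mathbf K$-linear map $\mathscr H\to\mathscr H_{|\mathcal R}$, $f=\sum_\gamma f_\gamma z^\gamma\mapsto f_{|\mathcal R}=\sum_{\gamma\in\mathcal R}f_\gamma z^\gamma$, restricts to a $\mathbf K$-linear isomorphism from $\operatorname{Sol}(L,\mathscr H)=\{f\in\mathscr H: L(f)=0\}$ onto $\mathcal C_{\mathcal R}=\{f\in\mathscr H_{|\mathcal R}:\operatorname{supp} L(f)\cap\psi(\mathcal R)=\emptyset\}=\{f\in\mathscr H_{|\mathcal R}:\pi(\operatorname{supp} L(f))\cap\mathcal R=\emptyset\}$.
   Context: Let $\mathbf K$ be a field and $\ell\geq 2$ an integer. Let $\mathscr H$ be the field of Hahn series $f=\sum_{\gamma\in\mathbb Q}f_\gamma z^\gamma$ with coefficients in $\mathbf K$ and well-ordered support $\operatorname{supp} f=\{\gamma: f_\gamma\neq 0\}$; for $Q\subset\mathbb Q$, $\mathscr H_{|Q}=\{f\in\mathscr H:\operatorname{supp} f\subset Q\}$. Let $\phi_\ell$ be the automorphism $f(z)\mapsto f(z^\ell)$. Let $L=a_n\phi_\ell^n+\dots+a_0$ with $n\geq1$, $a_i\in\mathbf K[z]$, $a_0a_n\neq0$, acting by $L(f)=\sum_i a_i f(z^{\ell^i})$. Let $\mathcal P(L)=\{(\ell^i,j): 0\le i\le n,\ j\in\operatorname{supp} a_i\}$. The Newton polygon of $L$ is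 the convex hull of $\{(\ell^i,j): 0\le i\le n,\ j\geq\operatorname{val} a_i\}\subset\mathbb R^2$; the slopes of its non-vertical edges form $\mathcal S(L)$. Define $\Psi(v)=\{v\ell^i+j:(\ell^i,j)\in\mathcal P(L)\}$, $\psi(v)=\min\Psi(v)$, $\pi(q)=\max\{(q-j)/\ell^i:(\ell^i,j)\in\mathcal P(L)\}$; images of sets are taken elementwise. Hypothesis (H) on $\mathcal V\subset\mathbb Q$: (1) every $f\in\mathscr H$ with $L(f)=0$ satisfies $\operatorname{supp} f\subset\mathcal V$; (2) $\mathcal V$ is well-ordered; (3) $-\mathcal S(L)\subset\mathcal V$; (4) $\bigcup_{v\in\mathcal V}\pi(\Psi(v))=\mathcal V$. A set $\mathcal R\subset\mathbb Q$ satisfies $\star_{\mathcal V}$ if (a) $-\mathcal S(L)\subset\mathcal R\subset\mathcal V$ and (b) $\bigcup_{v\in\mathcal V\setminus\mathcal R}\pi(\Psi(v))=\mathcal V\setminus\mathcal R$. *)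

(* Hahn series over Q with coefficients in a field K are
   represented by their coefficient functions rat -> K with well-ordered
   support; subsets of Q are predicates rat -> Prop. *)
From HB Require Import structures.
From mathcomp Require Import all_boot all_order all_algebra.
From Stdlib Require Import ClassicalEpsilon.
Set Implicit Arguments. Unset Strict Implicit. Unset Printing Implicit Defensive.
Import Order.TTheory GRing.Theory Num.Theory.
Local Open Scope ring_scope.

Definition well_ordered (A : rat -> Prop) : Prop :=
  forall B : rat -> Prop, (forall q, B q -> A q) -> (exists q, B q) ->
  exists m, B m /\ forall q, B q -> m <= q.

Section Defs.
Variable K : fieldType.

Definition supp (f : rat -> K) : rat -> Prop := fun q => f q != 0.

Definition hahn (f : rat -> K) : Prop := well_ordered (supp f).

Definition hahn_on (Q : rat -> Prop) (f : rat -> K) : Prop :=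
  hahn f /\ forall q, supp f q -> Q q.

Definition restr (R : rat -> Prop) (f : rat -> K) : rat -> K :=
  fun q => if excluded_middle_informative (R q) then f q else 0.

Definition pval (p : {poly K}) : nat := find (fun c => c != 0) p.

Variables (l n : nat) (a : nat -> {poly K}).

(* L(f) = sum_{i<=n} a_i(z) f(z^(l^i)); coefficient of z^q *)
Definition Lop (f : rat -> K) : rat -> K :=
  fun q => \sum_(i < n.+1) \sum_(j < size (a i))
             (a i)`_j * f ((q - j%:R) / (l%:R ^+ i)).

(* P(L) = {(l^i, j) : 0 <= i <= n, j in supp a_i}, encoded by pairs (i, j) *)
Definition PL : seq (nat * nat) :=
  [seq (i, j) | i <- iota 0 n.+1,
                j <- [seq j <- iota 0 (size (a i)) | (a i)`_j != 0]].

Definition Psi (v : rat) : seq rat :=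
  [seq v * l%:R ^+ p.1 + p.2%:R | p <- PL].

Definition seqmin (s : seq rat) : rat := \big[Order.min/head 0 s]_(x <- s) x.
Definition seqmax (s : seq rat) : rat := \big[Order.max/head 0 s]_(x <- s) x.

Definition psi (v : rat) : rat := seqmin (Psi v).

Definition pi (q : rat) : rat :=
  seqmax [seq (q - p.2%:R) / l%:R ^+ p.1 | p <- PL].

(* S(L): slopes of the non-vertical edges of the Newton polygon, i.e. of the
   convex hull of {(l^i, j) : j >= val a_i}.  A non-vertical edge is a segment
   of the lower boundary joining two vertices (l^i, val a_i), (l^k, val a_k),
   i < k, whose line supports all the points. *)
Definition slope (s : rat) : Prop :=
  exists i k, [/\ (i < k <= n)%N, a i != 0, a k != 0,
    s = ((pval (a k))%:R - (pval (a i))%:R) / (l%:R ^+ k - l%:R ^+ i) &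
    forall m, (m <= n)%N -> a m != 0 ->
      (pval (a i))%:R - s * l%:R ^+ i <= (pval (a m))%:R - s * l%:R ^+ m].

Definition Sol (f : rat -> K) : Prop := hahn f /\ forall q, Lop f q = 0.

Definition hypH (V : rat -> Prop) : Prop :=
  [/\ (forall f, Sol f -> forall q, supp f q -> V q),
      well_ordered V,
      (forall s, slope s -> V (- s)) &
      (forall q, (exists v, V v /\ exists2 w, w \in Psi v & q = pi w) <-> V q)].

Definition starV (V R : rat -> Prop) : Prop :=
  [/\ (forall s, slope s -> R (- s)),
      (forall q, R q -> V q) &
      (forall q, (exists v, (V v /\ ~ R v) /\ exists2 w, w \in Psi v & q = pi w)
                 <-> (V q /\ ~ R q))].

Definition CR (R : rat -> Prop) (f : rat -> K) : Prop :=
  hahn_on R f /\ forall v, R v -> ~ supp (Lop f) (psi v).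

Definition CR' (R : rat -> Prop) (f : rat -> K) : Prop :=
  hahn_on R f /\ forall q, supp (Lop f) q -> ~ R (pi q).

End Defs.

(* The maps pi and psi are mutually inverse increasing bijections of Q, and the
   coefficient L(f)_{psi v} only involves the f_u with u <= v.  In it, f_v is
   multiplied by the sum of the a_{i,j} over the points (l^i, j) of P(L) where
   v l^i + j attains psi v; two such points span an edge of the Newton polygon
   of slope -v, so for v outside R this sum has a single nonzero term.  Hence
   for v in V \ R the equation L(f)_{psi v} = 0 determines f_v from the f_u,
   u < v: comparing two solutions at the least point of their difference gives
   injectivity, and well-founded recursion on V builds a solution from any
   g in C_R.  Property (b) of star_V says that the equations indexed by psi(R)
   do not see the coefficients of a solution outside R. *)

From Pilot Require Import Defs.
From mathcomp Require Import all_boot all_order all_algebra.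
From Stdlib Require Import ClassicalEpsilon Classical FunctionalExtensionality.
From mathcomp Require Import ring.
Import Order.TTheory GRing.Theory Num.Theory.
Local Open Scope ring_scope.

Lemma seqmin_le (s : seq rat) x : x \in s -> seqmin s <= x.
Proof. by move=> xs; rewrite /seqmin ge_bigmin_seq. Qed.

Lemma le_seqmax (s : seq rat) x : x \in s -> x <= seqmax s.
Proof. by move=> xs; rewrite /seqmax le_bigmax_seq. Qed.

Lemma seqmin_mem (s : seq rat) : s != [::] -> seqmin s \in s.
Proof.
case: s => // x s _; rewrite /seqmin big_seq.
apply: (big_ind (fun m => m \in x :: s)); rewrite ?mem_head // => y z.
by rewrite /Order.min; case: ifP.
Qed.

Lemma seqmax_mem (s : seq rat) : s != [::] -> seqmax s \in s.
Proof.
case: s => // x s _; rewrite /seqmax big_seq.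
apply: (big_ind (fun m => m \in x :: s)); rewrite ?mem_head // => y z.
by rewrite /Order.max; case: ifP.
Qed.

Lemma sub_well_ordered (A B : rat -> Prop) :
  well_ordered A -> (forall q, B q -> A q) -> well_ordered B.
Proof. by move=> woA BA C CB; apply: woA => q /CB /BA. Qed.

Lemma well_ordered_wf {V : rat -> Prop} :
  well_ordered V -> well_founded (fun u v => V u /\ u < v).
Proof.
move=> woV.
have accV v : V v -> Acc (fun u v => V u /\ u < v) v.
  move=> Vv; apply: NNPP => nacc.
  have [m [[Vm naccm] minm]] :=
    woV (fun v => V v /\ ~ Acc _ v) (fun _ => @proj1 _ _) (ex_intro _ v (conj Vv nacc)).
  apply: naccm; constructor => u [Vu ltum]; apply: NNPP => naccu.
  by have := minm u (conj Vu naccu); rewrite leNgt ltum.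
by move=> v; constructor => u [Vu _]; apply: accV.
Qed.

Lemma wf_fixpoint {T U : Type} {r : T -> T -> Prop} (u0 : U) (F : (T -> U) -> T -> U) :
  well_founded r ->
  (forall h1 h2 x, (forall y, r y x -> h1 y = h2 y) -> F h1 x = F h2 x) ->
  exists f, forall x, f x = F f x.
Proof.
move=> wf_r F_local.
pose G x (rec : forall y, r y x -> U) :=
  F (fun y => if excluded_middle_informative (r y x) is left ryx then rec y ryx else u0) x.
exists (Fix wf_r (fun _ => U) G) => x.
rewrite (Fix_eq wf_r (fun _ => U) G); last first.
  move=> y f1 f2 E; apply: F_local => z rzy.
  by case: excluded_middle_informative.
apply: F_local => y ryx.
by case: excluded_middle_informative.
Qed.

Section Restriction.
Variables (K : fieldType) (R : rat -> Prop) (f : rat -> K).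

Lemma restr_in q : R q -> restr R f q = f q.
Proof. by rewrite /restr; case: excluded_middle_informative. Qed.

Lemma restr_out q : ~ R q -> restr R f q = 0.
Proof. by rewrite /restr; case: excluded_middle_informative. Qed.

Lemma supp_restr q : supp (restr R f) q <-> R q /\ supp f q.
Proof.
rewrite /supp; have [Rq|nRq] := classic (R q); first by rewrite restr_in; tauto.
by rewrite restr_out // eqxx; split=> // - [].
Qed.

End Restriction.

Arguments restr_in {K R} f {q}.
Arguments restr_out {K R} f {q}.

Lemma restr_scale_add (K : fieldType) (R : rat -> Prop) (c : K) (f g : rat -> K) q :
  restr R (fun x => c * f x + g x) q = c * restr R f q + restr R g q.
Proof.
have [Rq|nRq] := classic (R q); first by rewrite !restr_in.
by rewrite !restr_out // mulr0 addr0.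
Qed.

Section DifferenceOperator.
Variables (K : fieldType) (l n : nat) (a : nat -> {poly K}).
Hypotheses (l_gt1 : (1 < l)%N) (a0_neq0 : a 0%N != 0).

Local Notation PL := (PL n a).
Local Notation Psi := (Psi l n a).
Local Notation psi := (psi l n a).
Local Notation pi := (Defs.pi l n a).
Local Notation Lop := (Lop l n a).
Local Notation slope := (slope l n a).

Definition psi_of (p : nat * nat) (v : rat) : rat := v * l%:R ^+ p.1 + p.2%:R.
Definition pi_of (p : nat * nat) (q : rat) : rat := (q - p.2%:R) / l%:R ^+ p.1.

Lemma expl_gt0 i : 0 < (l%:R : rat) ^+ i.
Proof. by rewrite exprn_gt0 // ltr0n ltnW. Qed.

Lemma psi_ofK p : cancel (psi_of p) (pi_of p).
Proof. by move=> v; rewrite /pi_of /psi_of addrK mulfK // gt_eqF // expl_gt0. Qed.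

Lemma pi_ofK p : cancel (pi_of p) (psi_of p).
Proof. by move=> q; rewrite /pi_of /psi_of divfK ?subrK // gt_eqF // expl_gt0. Qed.

Lemma le_pi_of p q v : (pi_of p q <= v) = (q <= psi_of p v).
Proof. by rewrite /pi_of ler_pdivrMr ?expl_gt0 // lerBlDr. Qed.

Lemma mem_PL i j :
  ((i, j) \in PL) = [&& (i <= n)%N, (j < size (a i))%N & (a i)`_j != 0].
Proof.
apply/allpairsPdep/idP => [[i' [j' [+ + [-> ->]]]]|/and3P [ilen jlt aij]].
  by rewrite mem_iota ltnS mem_filter mem_iota /= => -> /andP [-> ->].
by exists i, j; rewrite mem_iota ltnS mem_filter mem_iota ilen jlt aij.
Qed.

Lemma uniq_PL : uniq PL.
Proof.
apply: allpairs_uniq_dep => [|i _|]; rewrite ?iota_uniq ?filter_uniq ?iota_uniq //.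
by move=> [i j] [i' j'] _ _ /= [-> ->].
Qed.

Lemma pval_spec (p : {poly K}) : p != 0 ->
  [/\ (pval p < size p)%N, p`_(pval p) != 0 & forall j, (j < pval p)%N -> p`_j = 0].
Proof.
move=> p_neq0; have has_nz : has (fun c => c != 0) p.
  apply/hasP; exists (lead_coef p); last by rewrite lead_coef_eq0.
  by rewrite /lead_coef mem_nth // ltn_predL size_poly_gt0.
split; first by rewrite /pval -has_find.
  exact: (nth_find 0 has_nz).
by move=> j /(before_find 0) /negbFE /eqP.
Qed.

Lemma PL_neq0 : PL != [::].
Proof.
have [lt_size nz _] := pval_spec (a 0%N) a0_neq0.
by apply: contraTneq (_ : (0%N, pval (a 0%N)) \in PL) => [->|]; rewrite ?mem_PL ?lt_size.
Qed.

Lemma mem_Psi v {p} : p \in PL -> psi_of p v \in Psi v.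
Proof. exact: map_f. Qed.

Lemma psi_le v {p} : p \in PL -> psi v <= psi_of p v.
Proof. by move=> /(mem_Psi v) /seqmin_le. Qed.

Lemma le_pi q {p} : p \in PL -> pi_of p q <= pi q.
Proof. by move=> /(map_f (pi_of^~ q)) /le_seqmax. Qed.

Lemma psi_attained v : exists2 p, p \in PL & psi v = psi_of p v.
Proof. by apply/mapP/seqmin_mem; rewrite -size_eq0 size_map size_eq0 PL_neq0. Qed.

Lemma pi_attained q : exists2 p, p \in PL & pi q = pi_of p q.
Proof. by apply/mapP/seqmax_mem; rewrite -size_eq0 size_map size_eq0 PL_neq0. Qed.

Lemma psiK : cancel psi pi.
Proof.
move=> v; apply/le_anti/andP; split.
  by have [p PLp ->] := pi_attained (psi v); rewrite le_pi_of psi_le.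
by have [p PLp E] := psi_attained v; rewrite -{1}(psi_ofK p v) -E le_pi.
Qed.

Lemma piK : cancel pi psi.
Proof.
move=> q; apply/le_anti/andP; split.
  by have [p PLp ->] := pi_attained q; rewrite -{2}(pi_ofK p q) psi_le.
by have [p PLp ->] := psi_attained (pi q); rewrite -le_pi_of le_pi.
Qed.

Lemma pi_of_psi_le v {p} : p \in PL -> pi_of p (psi v) <= v.
Proof. by move=> PLp; rewrite -{2}(psiK v) le_pi. Qed.

Lemma Lop_PL h q : Lop h q = \sum_(p <- PL) (a p.1)`_p.2 * h (pi_of p q).
Proof.
have iotaE m : iota 0 m = index_iota 0 m by rewrite /index_iota subn0.
rewrite /Lop /PL big_allpairs_dep iotaE big_mkord; apply: eq_bigr => i _.
rewrite big_filter iotaE big_mkord [RHS]big_mkcond; apply: eq_bigr => j _ /=.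
by case: eqP => [->|]; rewrite ?mul0r.
Qed.

Lemma Lop_eq0 h q : (forall p, p \in PL -> h (pi_of p q) = 0) -> Lop h q = 0.
Proof. by move=> h0; rewrite Lop_PL big1_seq // => p /andP [_ /h0 ->]; rewrite mulr0. Qed.

Lemma LopB h1 h2 q : Lop (fun x => h1 x - h2 x) q = Lop h1 q - Lop h2 q.
Proof. by rewrite !Lop_PL -sumrB; apply: eq_bigr => p _; rewrite mulrBr. Qed.

Definition Lcoef v : K := Lop (fun u => (u == v)%:R) (psi v).

Lemma Lop_psi v h :
  (forall p, p \in PL -> pi_of p (psi v) < v -> h (pi_of p (psi v)) = 0) ->
  Lop h (psi v) = h v * Lcoef v.
Proof.
move=> h0; rewrite /Lcoef !Lop_PL mulr_sumr; apply: eq_big_seq => p PLp.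
rewrite mulrCA; have := pi_of_psi_le v PLp; rewrite le_eqVlt => /predU1P [->|lt].
  by rewrite eqxx mulr1.
by rewrite h0 // lt_eqF // !mulr0.
Qed.

Lemma argmin_pval {v i j} : (i, j) \in PL -> psi_of (i, j) v = psi v ->
  a i != 0 /\ j = pval (a i).
Proof.
rewrite mem_PL => /and3P [ilen jlt aij_neq0] E.
have ai_neq0 : a i != 0 by apply: contraNneq aij_neq0 => ->; rewrite coef0.
have [pval_lt pval_neq0 below_pval] := pval_spec (a i) ai_neq0.
split=> //; case: (ltngtP j (pval (a i))) => // [/below_pval|pval_ltj].
  by move/eqP: aij_neq0.
have PLi : (i, pval (a i)) \in PL by rewrite mem_PL ilen pval_lt pval_neq0.
by have := psi_le v PLi; rewrite -E /psi_of /= lerD2l ler_nat leqNgt pval_ltj.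
Qed.

Lemma argmin_slope v i1 j1 i2 j2 : (i1 < i2)%N ->
  (i1, j1) \in PL -> (i2, j2) \in PL ->
  psi_of (i1, j1) v = psi v -> psi_of (i2, j2) v = psi v -> slope (- v).
Proof.
move=> lt12 PL1 PL2 E1 E2.
have [a1_neq0 pval1] := argmin_pval PL1 E1; have [a2_neq0 pval2] := argmin_pval PL2 E2.
move: (PL2); rewrite mem_PL => /and3P [i2len _ _].
exists i1, i2; rewrite -pval1 -pval2; split; rewrite ?lt12 //.
- have gap_neq0 : (l%:R : rat) ^+ i2 - l%:R ^+ i1 != 0.
    by rewrite subr_eq0 gt_eqF // ltr_eXn2l // ltr1n.
  have -> : (j2%:R : rat) - j1%:R = - v * (l%:R ^+ i2 - l%:R ^+ i1).
    apply/eqP; rewrite -subr_eq0 -(subrr (psi v)) -{1}E2 -E1 /psi_of /=.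
    by apply/eqP; ring.
  by rewrite mulfK.
- move=> m mlen am_neq0; have [pval_lt pval_neq0 _] := pval_spec (a m) am_neq0.
  have PLm : (m, pval (a m)) \in PL by rewrite mem_PL mlen pval_lt pval_neq0.
  have := psi_le v PLm; rewrite -E1 /psi_of /=.
  by rewrite !mulNr !opprK !(addrC _ (v * _)).
Qed.

Lemma argmin_unique {v p1 p2} : ~ slope (- v) ->
  p1 \in PL -> p2 \in PL -> psi_of p1 v = psi v -> psi_of p2 v = psi v -> p1 = p2.
Proof.
case: p1 p2 => [i1 j1] [i2 j2] not_slope PL1 PL2 E1 E2.
case: (ltngtP i1 i2) => [lt12|lt21|eq12].
- by case: not_slope; apply: argmin_slope lt12 PL1 PL2 E1 E2.
- by case: not_slope; apply: argmin_slope lt21 PL2 PL1 E2 E1.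
- by rewrite (argmin_pval PL1 E1).2 (argmin_pval PL2 E2).2 eq12.
Qed.

Lemma Lcoef_neq0 {v} : ~ slope (- v) -> Lcoef v != 0.
Proof.
move=> not_slope; have [p0 PLp0 E0] := psi_attained v.
rewrite /Lcoef Lop_PL (bigD1_seq p0) ?uniq_PL //= big_seq_cond big1 => [|p /andP [PLp]].
  rewrite E0 psi_ofK eqxx mulr1 addr0.
  by move: PLp0; case: p0 {E0} => i j; rewrite mem_PL => /and3P [].
apply: contraNeq; rewrite mulf_eq0 negb_or => /andP [_].
case: (pi_of p (psi v) =P v) => [E _|_]; last by rewrite eqxx.
apply/eqP; apply: (argmin_unique not_slope PLp PLp0 _ (esym E0)).
by rewrite -[in LHS]E pi_ofK.
Qed.

Lemma Lop_psi_eq0 {A B : rat -> Prop} {h v} :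
  (forall u w, A u -> w \in Psi u -> B (pi w)) -> ~ B v ->
  (forall u, h u != 0 -> A u) -> Lop h (psi v) = 0.
Proof.
move=> AB notBv hA; apply: Lop_eq0 => p PLp; apply/eqP/contraT => /hA Au.
by case: notBv; have := AB _ _ Au (mem_Psi _ PLp); rewrite pi_ofK psiK.
Qed.

Lemma CR_iff_CR' R f : CR l n a R f <-> CR' l n a R f.
Proof.
split=> [] [hahn_f Lf]; split=> //.
  by move=> q Lfq Rq; apply: (Lf _ Rq); rewrite piK.
by move=> v Rv Lfv; apply: (Lf _ Lfv); rewrite psiK.
Qed.

Section Solutions.
Variables V R : rat -> Prop.
Hypothesis Sol_supp : forall f, Sol l n a f -> forall q, supp f q -> V q.
Hypothesis woV : well_ordered V.
Hypothesis pi_Psi_V : forall u w, V u -> w \in Psi u -> V (pi w).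
Hypothesis slope_R : forall s, slope s -> R (- s).
Hypothesis R_V : forall q, R q -> V q.
Hypothesis pi_Psi_VR :
  forall u w, V u /\ ~ R u -> w \in Psi u -> V (pi w) /\ ~ R (pi w).

Lemma notR_not_slope {v} : ~ R v -> ~ slope (- v).
Proof. by move=> nRv /slope_R; rewrite opprK. Qed.

Lemma restr_Sol_CR f : Sol l n a f -> CR l n a R (restr R f).
Proof.
move=> [hahn_f Lf]; split; first split.
- by apply: sub_well_ordered hahn_f _ => q /supp_restr [].
- by move=> q /supp_restr [].
move=> v Rv; have : Lop (fun x => f x - restr R f x) (psi v) = 0.
  apply: (Lop_psi_eq0 (B := fun q => V q /\ ~ R q) pi_Psi_VR) => [[_ //]|u].
  have [Ru|nRu] := classic (R u); first by rewrite restr_in // subrr eqxx.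
  by rewrite restr_out // subr0 => fu; split=> //; apply: Sol_supp fu.
by rewrite LopB Lf sub0r /supp => /eqP; rewrite oppr_eq0 => ->.
Qed.

Lemma Sol_restr_inj f1 f2 : Sol l n a f1 -> Sol l n a f2 ->
  restr R f1 =1 restr R f2 -> f1 =1 f2.
Proof.
move=> Sol1 Sol2 eqR q; apply: NNPP => /eqP; rewrite -subr_eq0 => neq.
pose d x := f1 x - f2 x.
have dV x : d x != 0 -> V x.
  have [f1x|f1x _] := eqVneq (f1 x) 0; last exact: Sol_supp Sol1 _ f1x.
  by rewrite /d f1x sub0r oppr_eq0; apply: Sol_supp.
have [m [dm minm]] := woV (fun x => d x != 0) dV (ex_intro _ q neq).
have nRm : ~ R m.
  by move=> Rm; move: dm; rewrite /d -(restr_in f1 Rm) -(restr_in f2 Rm) eqR subrr eqxx.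
have : Lop d (psi m) = 0 by rewrite LopB Sol1.2 Sol2.2 subrr.
rewrite Lop_psi => [/eqP|p _ ltm].
  by rewrite mulf_eq0 (negbTE dm) (negbTE (Lcoef_neq0 (notR_not_slope nRm))).
by apply/eqP/contraT => /minm; rewrite leNgt ltm.
Qed.

Lemma CR_restr_Sol g : CR l n a R g -> exists f, Sol l n a f /\ restr R f =1 g.
Proof.
move=> [[_ gR] Lg].
pose below v u := V u /\ u < v.
(* Outside R, f_v is the value that makes L(f)_{psi v} vanish given the f_u, u < v. *)
pose F (h : rat -> K) (v : rat) : K :=
  if excluded_middle_informative (R v) then g v
  else - Lop (restr (below v) h) (psi v) / Lcoef v.
have [f fE] : exists f, forall v, f v = F f v.
  apply: (wf_fixpoint (0 : K) F (well_ordered_wf woV)) => h1 h2 v E; rewrite /F.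
  case: (excluded_middle_informative (R v)) => //= _; congr (- Lop _ _ / _).
  apply: functional_extensionality => u; have [uv|uv] := classic (below v u).
    by rewrite !restr_in // E.
  by rewrite !restr_out.
have f_R q : R q -> f q = g q.
  by move=> Rq; rewrite fE /F; case: excluded_middle_informative.
have f_notR q : ~ R q -> f q = - Lop (restr (below q) f) (psi q) / Lcoef q.
  by move=> nRq; rewrite fE /F; case: excluded_middle_informative.
have g_out q : ~ R q -> g q = 0 by move=> nRq; apply/eqP/contraT => /gR.
have below_V v u : restr (below v) f u != 0 -> V u by case/supp_restr => -[].
have f_V u : f u != 0 -> V u.
  have [Ru|nRu] := classic (R u); first by rewrite f_R // => /gR /R_V.
  move=> fu; apply: NNPP => nVu; move: fu.
  by rewrite f_notR // (Lop_psi_eq0 pi_Psi_V nVu (below_V u)) oppr0 mul0r eqxx.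
have Lf q : Lop f q = 0.
  rewrite -(piK q); set v := pi q; have [Rv|nRv] := classic (R v).
    have /negP /negPn /eqP Lg0 := Lg v Rv.
    have : Lop (fun x => f x - g x) (psi v) = 0.
      apply: (Lop_psi_eq0 (B := fun q => V q /\ ~ R q) pi_Psi_VR) => [[_ //]|u].
      have [Ru|nRu] := classic (R u); first by rewrite f_R // subrr eqxx.
      by rewrite g_out // subr0 => /f_V.
    by rewrite LopB Lg0 subr0.
  have : Lop (fun x => f x - restr (below v) f x) (psi v) =
         (f v - restr (below v) f v) * Lcoef v.
    apply: Lop_psi => p _ ltv; set u := pi_of p _ in ltv *.
    have [uv|uv] := classic (below v u); first by rewrite restr_in // subrr.
    by rewrite restr_out // subr0; apply/eqP/contraT => /f_V Vu; case: uv.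
  rewrite LopB (restr_out f (_ : ~ below v v)) => [|[_]]; last by rewrite ltxx.
  rewrite subr0 f_notR // divfK; last exact: Lcoef_neq0 (notR_not_slope nRv).
  by move/eqP; rewrite subr_eq addNr => /eqP.
exists f; split; first by split; [apply: sub_well_ordered woV f_V|].
move=> q; have [Rq|nRq] := classic (R q); first by rewrite (restr_in f Rq) f_R.
by rewrite (restr_out f nRq) g_out.
Qed.

End Solutions.
End DifferenceOperator.

Theorem mainTheorem17 (K : fieldType) (l n : nat) (a : nat -> {poly K})
    (V R : rat -> Prop) :
  (2 <= l)%N -> (1 <= n)%N -> a 0%N != 0 -> a n != 0 ->
  hypH l n a V -> starV l n a V R ->
  [/\ (forall f, CR l n a R f <-> CR' l n a R f),
      (forall (c : K) (f g : rat -> K) q,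
          restr R (fun x => c * f x + g x) q = c * restr R f q + restr R g q),
      (forall f, Sol l n a f -> CR l n a R (restr R f)),
      (forall f1 f2, Sol l n a f1 -> Sol l n a f2 ->
          (forall q, restr R f1 q = restr R f2 q) -> forall q, f1 q = f2 q) &
      (forall g, CR l n a R g ->
          exists f, Sol l n a f /\ forall q, restr R f q = g q)].
Proof.
move=> l_gt1 _ a0_neq0 _ [Sol_supp woV _ pi_Psi] [slope_R R_V pi_Psi_notR].
have pi_Psi_V u w : V u -> w \in Psi l n a u -> V (Defs.pi l n a w).
  by move=> Vu Psi_w; apply/pi_Psi; exists u; split=> //; exists w.
have pi_Psi_VR u w : V u /\ ~ R u -> w \in Psi l n a u ->
    V (Defs.pi l n a w) /\ ~ R (Defs.pi l n a w).
  by move=> VRu Psi_w; apply/pi_Psi_notR; exists u; split=> //; exists w.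
split.
- exact: CR_iff_CR'.
- exact: restr_scale_add.
- exact: restr_Sol_CR _ _ _ _ l_gt1 a0_neq0 _ _ Sol_supp pi_Psi_VR.
- exact: Sol_restr_inj _ _ _ _ l_gt1 a0_neq0 _ _ Sol_supp woV slope_R.
- exact: CR_restr_Sol _ _ _ _ l_gt1 a0_neq0 _ _ woV pi_Psi_V slope_R R_V pi_Psi_VR.
Qed.
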